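(* Consider the post-withdrawal-lock phase of the following crowdsale protocol, run in discrete blocks $s = t, t+1, \dots, u$. At every moment the state is a finite set of \emph{active} bids, each bid $A$ having a current amount $v(A) > 0$ and a personal cap $c(A) > 0$; the \emph{valuation} is $V = \sum_{A \text{ active}} v(A)$ (with $V = 0$ if there are no active bids). The set of active bids present at the start of block $t$ is arbitrary (any finite set of bids with positive amounts and positive caps). In each block $s$ with $t \le s \le u$ the protocol performs: Step 1 (receive bids): any finite number of new bids arrive one after another; each new bid $A$ has an amount $v(A) > 0$ and a cap $c(A)$ satisfying $c(A) > V$, where $V$ is the valuation at the moment of its arrival; it is then added to the active set. Step 3 (automatic withdrawals): while there is an active bid $B$ with $V > c(B)$, repeat: let $m = \min\{c(A) : A \text{ active}\}$, let $B_1, \dots, B_k$ be all active bids with $c(B_i) = m$, and let $S = \sum_{i=1}^k v(B_i)$. If $V - S \ge m$, all of $B_1, \dots, B_k$ are refunded in full and removed from the active set. Otherwise, with $q = (V - m)/S$, each $v(B_i)$ is replaced by $(1-q)\, v(B_i)$ (these bids remain active), so that the valuation becomes exactly $m$. The valuation $V$ is recomputed after each iteration. Let $V_s$ denote the valuation at the end of block $s$ (after Step 3). Then for every block $s$ with $t < s \le u$, one has $V_s \ge V_{s-1}$; that is, after the withdrawal lock time $t$ the crowdsale valuation is monotonically non-decreasing, regardless of which bids buyers submit.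
   Context: This models an interactive coin offering smart contract after the ''withdrawal lock'' time $t$ (no voluntary withdrawals are allowed after $t$). A bid's personal cap $c(A)$ is the maximum total sale valuation at which its owner is willing to participate; if the valuation exceeds it, the bid is (fully or partially) refunded by the automatic-withdrawal step described in the claim. Only active bids count toward the valuation $V$. *)

From HB Require Import structures.
From mathcomp Require Import all_boot all_order all_algebra.
Set Implicit Arguments. Unset Strict Implicit. Unset Printing Implicit Defensive.
Import Order.TTheory GRing.Theory Num.Theory.
Local Open Scope ring_scope.

Definition bid (R : realFieldType) := (R * R)%type.

Definition amount {R : realFieldType} (b : bid R) : R := b.1.
Definition cap {R : realFieldType} (b : bid R) : R := b.2.

Definition valuation {R : realFieldType} (s : seq (bid R)) : R :=
  \sum_(b <- s) amount b.

Inductive star {T : Type} (r : T -> T -> Prop) : T -> T -> Prop :=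
| star_refl x : star r x x
| star_step x y z : r x y -> star r y z -> star r x z.

Definition arrive {R : realFieldType} (s s' : seq (bid R)) : Prop :=
  exists b : bid R, 0 < amount b /\ valuation s < cap b /\ s' = rcons s b.

Definition is_min_cap {R : realFieldType} (s : seq (bid R)) (m : R) : Prop :=
  (m \in map cap s) /\ (forall b, b \in s -> m <= cap b).

Definition withdraw_iter {R : realFieldType} (s s' : seq (bid R)) : Prop :=
  (exists2 B, B \in s & cap B < valuation s) /\
  exists m, is_min_cap s m /\
    let S := \sum_(b <- s | cap b == m) amount b in
    let V := valuation s in
    if m <= V - S then
      s' = [seq b <- s | cap b != m]
    else
      let q := (V - m) / S in
      s' = [seq (if cap b == m then ((1 - q) * amount b, cap b) else b) | b <- s].

Definition stable {R : realFieldType} (s : seq (bid R)) : Prop :=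
  forall B, B \in s -> valuation s <= cap B.

Definition block {R : realFieldType} (s0 s2 : seq (bid R)) : Prop :=
  exists s1, star arrive s0 s1 /\ star withdraw_iter s1 s2 /\ stable s2.

Definition valid_state {R : realFieldType} (s : seq (bid R)) : Prop :=
  forall b, b \in s -> 0 < amount b /\ 0 < cap b.

From HB Require Import structures.
From mathcomp Require Import all_boot all_order all_algebra.
Import Order.TTheory GRing.Theory Num.Theory.
Set Implicit Arguments. Unset Strict Implicit. Unset Printing Implicit Defensive.
Local Open Scope ring_scope.

(* Let V0 be the valuation at the end of a block.  Since that state is stable,
   V0 is at most every cap, so "V0 <= V and V0 <= every cap" holds.  Arrivals
   preserve this: they raise V and bring caps above V.  A withdrawal iteration
   preserves it too: it only removes bids or shrinks amounts, and it leaves V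
   at least the minimum cap m >= V0 (removal happens only when V - S >= m,
   otherwise V becomes exactly m).  Hence V0 <= V at the end of the next block. *)

Section Valuation.

Variable R : realFieldType.
Implicit Types (s : seq (bid R)) (b : bid R) (m q : R).

Lemma valuation_rcons s b : valuation (rcons s b) = valuation s + amount b.
Proof. by rewrite /valuation big_rcons. Qed.

Lemma valuation_filter_capN s m :
  valuation [seq b <- s | cap b != m]
  = valuation s - \sum_(b <- s | cap b == m) amount b.
Proof.
by rewrite /valuation big_filter [in RHS](bigID (fun b => cap b == m)) addrC addKr.
Qed.

Lemma valuation_scale_cap s m q :
  valuation [seq (if cap b == m then ((1 - q) * amount b, cap b) else b) | b <- s]
  = valuation s - q * \sum_(b <- s | cap b == m) amount b.
Proof.
rewrite /valuation big_map (bigID (fun b => cap b == m)) /=.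
rewrite [in RHS](bigID (fun b => cap b == m)) /=.
rewrite (eq_bigr (fun b => (1 - q) * amount b)); last by move=> b ->.
rewrite (eq_bigr amount (P := fun b => cap b != m)); last by move=> b /negbTE ->.
rewrite -big_distrr /=.
by rewrite mulrBl mul1r addrAC.
Qed.

End Valuation.

Lemma star_preserve (T : Type) (P : T -> Prop) (r : T -> T -> Prop) x y :
  (forall x y, P x -> r x y -> P y) -> P x -> star r x y -> P y.
Proof. by move=> rP Px xy; elim: xy Px => // x' y' z' /rP yz _ IH /yz. Qed.

Section BoundedBelow.

Variables (R : realFieldType) (V0 : R).
Implicit Types s : seq (bid R).

Definition bounded_below s : Prop :=
  (forall b, b \in s -> V0 <= cap b) /\ V0 <= valuation s.

Lemma arrive_bounded_below s s' :
  bounded_below s -> arrive s s' -> bounded_below s'.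
Proof.
move=> [capP valP] [b [amount_gt0 [val_lt_cap ->]]]; split.
- move=> x; rewrite mem_rcons inE => /predU1P [-> | /capP //].
  exact: le_trans valP (ltW val_lt_cap).
- by rewrite valuation_rcons (le_trans valP) // lerDl ltW.
Qed.

Lemma withdraw_iter_bounded_below s s' :
  bounded_below s -> withdraw_iter s s' -> bounded_below s'.
Proof.
move=> [capP valP] [_ [m [[/mapP [bm /capP V0_le_m ->] _] /=]]].
set S := \sum_(b <- s | cap b == cap bm) amount b.
case: ifP => [m_le_VS -> | _ ->]; split.
- by move=> b; rewrite mem_filter => /andP [_ /capP].
- by rewrite valuation_filter_capN (le_trans V0_le_m).
- by move=> _ /mapP [b /capP V0_le_b ->]; case: ifP.
- rewrite valuation_scale_cap -/S.
  (* For S = 0 the scaled amounts all lie in a zero sum, whatever q is. *)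
  have [-> | S_neq0] := eqVneq S 0; first by rewrite mulr0 subr0.
  by rewrite mulfVK // opprB addrC subrK.
Qed.

End BoundedBelow.

Lemma stable_bounded_below (R : realFieldType) (s : seq (bid R)) :
  stable s -> bounded_below (valuation s) s.
Proof. by move=> st; split => // b /st. Qed.

Lemma block_stable (R : realFieldType) (s0 s2 : seq (bid R)) :
  block s0 s2 -> stable s2.
Proof. by case=> s1 [_ []]. Qed.

Lemma block_valuation_mono (R : realFieldType) (s0 s2 : seq (bid R)) :
  stable s0 -> block s0 s2 -> valuation s0 <= valuation s2.
Proof.
move=> st0 [s1 [arrivals [withdrawals _]]].
have B0 := stable_bounded_below st0.
have B1 := star_preserve (@arrive_bounded_below _ _) B0 arrivals.
by case: (star_preserve (@withdraw_iter_bounded_below _ _) B1 withdrawals).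
Qed.

Theorem mainTheorem1 (R : realFieldType) (t u : nat)
    (init : seq (bid R)) (ends : nat -> seq (bid R)) :
  valid_state init ->
  block init (ends t) ->
  (forall s : nat, (t < s)%N -> (s <= u)%N -> block (ends s.-1) (ends s)) ->
  forall s : nat, (t < s)%N -> (s <= u)%N ->
    valuation (ends s.-1) <= valuation (ends s).
Proof.
move=> _ block_t blocks s t_lt_s s_le_u.
apply: block_valuation_mono (blocks s t_lt_s s_le_u).
have : (t <= s.-1)%N by case: s t_lt_s {s_le_u blocks}.
rewrite leq_eqVlt => /predU1P [<- | t_lt_s1]; first exact: block_stable block_t.
apply: block_stable (blocks _ t_lt_s1 _).
exact: leq_trans (leq_pred s) s_le_u.
Qed.
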